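(* For $N\ge 3$ let $\tilde{\mathcal{F}}_N=\{e_j\}_{j=1}^N$ be the harmonic frame of $\mathbb{R}^2$, $e_j=[\cos(2j\pi/N),\sin(2j\pi/N)]^T$. Let $r>0$, $\delta>0$ satisfy $$\int_{-\pi}^{\pi}\Delta_\delta(r\cos\theta)\cos\theta\,d\theta=0.$$ Then $\mathcal{E}_\delta(r,\tilde{\mathcal{F}}_N)=O(1/N)$ as $N\to\infty$ (with implied constant depending on $r,\delta$). In particular, this condition holds when $$\frac{r}{\delta}=\frac{\sqrt{8-2\sqrt{16-\pi^2}}}{\pi}.$$
   Context: For $\delta>0$, $Q_\delta(t):=\delta\lfloor t/\delta+1/2\rfloor$ and $\Delta_\delta(t):=t-Q_\delta(t)$. For a unit-norm tight frame $\mathcal{F}=\{e_j\}_{j=1}^N$ of $\mathbb{R}^2$ (i.e. $\|e_j\|=1$, $\sum_j e_je_j^T=\frac N2 I_2$), $E_\delta(x,\mathcal{F}):=\bigl\|x-\frac{2}{N}\sum_{j=1}^N Q_\delta(\langle x,e_j\rangle)e_j\bigr\|$. For $r>0$ set $x_\psi:=r[\cos\psi,\sin\psi]^T$ and $\mathcal{E}_\delta(r,\mathcal{F}):=\bigl(\int_0^{2\pi}E_\delta(x_\psi,\mathcal{F})^2\,d\psi\bigr)^{1/2}$. *)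

From Stdlib Require Import Reals Lra.
Open Scope R_scope.

(* floor of a real number: Int_part x = up x - 1 is the largest integer <= x *)
Definition floorR (x : R) : R := IZR (Int_part x).

Definition Qd (delta t : R) : R := delta * floorR (t / delta + / 2).

Definition Dd (delta t : R) : R := t - Qd delta t.

Definition has_integral (f : R -> R) (a b I : R) : Prop :=
  exists pr : Riemann_integrable f a b, RiemannInt pr = I.

Definition harm (N j : nat) : R * R :=
  (cos (2 * INR j * PI / INR N), sin (2 * INR j * PI / INR N)).

Definition Edelta (delta : R) (N : nat) (e : nat -> R * R) (x1 x2 : R) : R :=
  let c j := Qd delta (x1 * fst (e j) + x2 * snd (e j)) in
  let s1 := sum_f 1 N (fun j => c j * fst (e j)) in
  let s2 := sum_f 1 N (fun j => c j * snd (e j)) in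
  sqrt ((x1 - 2 / INR N * s1) ^ 2 + (x2 - 2 / INR N * s2) ^ 2).

Definition Esq (delta r : R) (N : nat) (e : nat -> R * R) (psi : R) : R :=
  (Edelta delta N e (r * cos psi) (r * sin psi)) ^ 2.

From Stdlib Require Import Reals Lra Lia ZArith Classical ClassicalEpsilon.
Open Scope R_scope.

(* Write q t = Q_delta (r cos t). Since <x_psi, e_j> = r cos (theta_j - psi), rotating by
   -psi turns the reconstruction error into
     (r - 2/N sum_k q u_k cos u_k, 2/N sum_k q u_k sin u_k)
   over an equispaced grid u_k of step h = 2 PI / N, i.e. into Riemann sums of q cos and
   q sin over a period, divided by PI. As q is monotone on [-PI, 0] and on [0, PI] and cos, sin
   are 1-Lipschitz, these sums are within O(h) of the integrals, uniformly in the grid offset.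
   By parity the integral of q sin vanishes, and the integral of q cos is
   PI r - int Delta_delta (r cos t) cos t = PI r. Hence the error is O(1/N) uniformly in psi,
   and so is its L^2 norm.
   For the special ratio, 1/2 < r/delta < 3/2, so q equals delta, 0, -delta on arcs cut at
   alpha = acos (delta / 2r); then the integral of q cos is 4 delta sin alpha, which equals
   PI r exactly when PI^2 (r/delta)^4 - 16 (r/delta)^2 + 4 = 0. *)

Lemma Rabs_le_between x y : Rabs x <= y -> - y <= x <= y.
Proof. unfold Rabs; destruct Rcase_abs; lra. Qed.

Lemma floorR_spec x : floorR x <= x < floorR x + 1.
Proof. unfold floorR; destruct (base_Int_part x); lra. Qed.

Lemma floorR_unique x (z : Z) : IZR z <= x < IZR z + 1 -> floorR x = IZR z.
Proof.
  intros Hz; destruct (floorR_spec x); unfold floorR in *; f_equal.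
  assert (IZR (Int_part x) < IZR (z + 1)) by (rewrite plus_IZR; lra).
  assert (IZR z < IZR (Int_part x + 1)) by (rewrite plus_IZR; lra).
  apply lt_IZR in H1; apply lt_IZR in H2; lia.
Qed.

Lemma floorR_le x y : x <= y -> floorR x <= floorR y.
Proof.
  intros Hxy; destruct (floorR_spec x), (floorR_spec y); unfold floorR in *.
  assert (IZR (Int_part x) < IZR (Int_part y + 1)) by (rewrite plus_IZR; lra).
  apply lt_IZR in H3; apply IZR_le; lia.
Qed.

Lemma Qd_bounds d t : 0 < d -> t - d / 2 < Qd d t <= t + d / 2.
Proof.
  intros Hd; unfold Qd; destruct (floorR_spec (t / d + / 2)).
  replace (t - d / 2) with (d * (t / d + / 2) - d) by (field; lra).
  replace (t + d / 2) with (d * (t / d + / 2)) by (field; lra).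
  split; nra.
Qed.

Lemma Qd_abs_le d t : 0 < d -> Rabs (Qd d t) <= Rabs t + d.
Proof.
  intros Hd; destruct (Qd_bounds d t Hd); apply Rabs_le.
  pose proof (Rle_abs t); pose proof (Rle_abs (- t)); rewrite Rabs_Ropp in *; lra.
Qed.

Lemma Qd_le d x y : 0 < d -> x <= y -> Qd d x <= Qd d y.
Proof.
  intros Hd Hxy; unfold Qd; apply Rmult_le_compat_l; [lra|].
  apply floorR_le, Rplus_le_compat_r, Rmult_le_compat_r; [|lra].
  left; apply Rinv_0_lt_compat; lra.
Qed.

Lemma Qd_level d t (z : Z) : 0 < d -> IZR z - / 2 <= t / d < IZR z + / 2 -> Qd d t = d * IZR z.
Proof. intros Hd Hz; unfold Qd; rewrite (floorR_unique _ z); [auto|lra]. Qed.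
Fixpoint sumn (f : nat -> R) (n : nat) : R :=
  match n with O => 0 | S m => sumn f m + f m end.

Lemma sumn_ext f g n : (forall k, (k < n)%nat -> f k = g k) -> sumn f n = sumn g n.
Proof. induction n; intros H; simpl; auto. rewrite IHn, H; auto. Qed.

Lemma sumn_lin f g a b n : sumn (fun k => a * f k + b * g k) n = a * sumn f n + b * sumn g n.
Proof. induction n; simpl; [ring|rewrite IHn; ring]. Qed.

Lemma sumn_scal f a n : sumn (fun k => a * f k) n = a * sumn f n.
Proof. induction n; simpl; [ring|rewrite IHn; ring]. Qed.

Lemma sumn_shift f n : sumn (fun k => f (S k)) n = sumn f n - f O + f n.
Proof. induction n; simpl; [ring|rewrite IHn; ring]. Qed.

Lemma sumn_front f n : sumn f (S n) = f O + sumn (fun k => f (S k)) n.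
Proof. rewrite sumn_shift; simpl; ring. Qed.

Lemma sumn_rev f n : sumn f n = sumn (fun k => f (n - 1 - k)%nat) n.
Proof.
  induction n; auto.
  rewrite (sumn_front (fun k => f (S n - 1 - k)%nat)); simpl sumn at 1; rewrite IHn.
  replace (S n - 1 - 0)%nat with n by lia.
  rewrite Rplus_comm; f_equal; apply sumn_ext; intros; f_equal; lia.
Qed.

Lemma sumn_antisym f n : (forall k, (k < n)%nat -> f (n - 1 - k)%nat = - f k) -> sumn f n = 0.
Proof.
  intros H; assert (sumn f n = - sumn f n); [|lra].
  rewrite sumn_rev at 1; rewrite (sumn_ext _ (fun k => -1 * f k)).
  - rewrite sumn_scal; ring.
  - intros; rewrite H; auto; ring.
Qed.

Lemma sum_f_sumn f N : (0 < N)%nat -> sum_f 1 N f = sumn (fun k => f (S k)) N.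
Proof.
  intros HN; unfold sum_f; destruct N as [|n]; [lia|]; clear HN.
  replace (S n - 1)%nat with n by lia.
  induction n; simpl in *; [ring|]; rewrite IHn; repeat f_equal; lia.
Qed.

Lemma sumn_telescope (a b v : nat -> R) (e : R) m :
  (forall k, (k < m)%nat -> Rabs (a (S k) - a k - b k) <= v (S k) - v k + e) ->
  Rabs (a m - a O - sumn b m) <= v m - v O + INR m * e.
Proof.
  induction m; intros H.
  - simpl; rewrite Rminus_diag, Rminus_0_r, Rabs_R0; lra.
  - rewrite S_INR; simpl sumn.
    replace (a (S m) - a O - (sumn b m + b m))
      with ((a m - a O - sumn b m) + (a (S m) - a m - b m)) by ring.
    eapply Rle_trans; [apply Rabs_triang|].
    pose proof (IHm (fun k Hk => H k ltac:(lia))); pose proof (H m ltac:(lia)); lra.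
Qed.

Lemma Riemann_integrable_interior_ext f g a b : a <= b ->
  (forall x, a < x < b -> f x = g x) ->
  Riemann_integrable g a b -> Riemann_integrable f a b.
Proof.
  intros hab Heq Hg.
  (* [f - g] vanishes on the open interval, so it is a step function *)
  assert (Hs : IsStepFun (fun x => f x - g x) a b).
  { exists (cons a (cons b nil)), (cons 0 nil).
    unfold adapted_couple, Rmin, Rmax; destruct Rle_dec; [|lra]; repeat split; auto.
    - intros i Hi; simpl in Hi; destruct i; [simpl; auto | lia].
    - intros i Hi; simpl in Hi; destruct i; [|lia].
      intros x Hx; unfold open_interval in Hx; simpl in Hx; rewrite Heq by lra; simpl; ring. }
  assert (Hint : Riemann_integrable (fun x => f x - g x) a b).
  { intros eps; exists (mkStepFun Hs), (mkStepFun (StepFun_P4 a b 0)); split.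
    - intros t _; simpl; unfold fct_cte; rewrite Rminus_diag, Rabs_R0; lra.
    - rewrite StepFun_P18, Rmult_0_l, Rabs_R0; apply cond_pos. }
  apply Riemann_integrable_ext with (f := fun x => (f x - g x) + 1 * g x).
  - intros; ring.
  - apply RiemannInt_P10; assumption.
Qed.

Lemma Riemann_integrable_extend f g a y z : a <= y -> y <= z ->
  (forall u, continuity_pt g u) -> (forall u, y < u < z -> f u = g u) ->
  Riemann_integrable f a y -> Riemann_integrable f a z.
Proof.
  intros Hay Hyz Hg Hfg Hf; apply RiemannInt_P21 with y; auto.
  apply Riemann_integrable_interior_ext with g; auto.
  apply continuity_implies_RiemannInt; auto.
Qed.

Definition piecewise_continuous_at (f : R -> R) (x : R) : Prop :=
  exists eta, 0 < eta /\ exists gl gr : R -> R,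
    (forall y, continuity_pt gl y) /\ (forall y, continuity_pt gr y) /\
    (forall y, x - eta < y < x -> f y = gl y) /\ (forall y, x < y < x + eta -> f y = gr y).

Lemma piecewise_continuous_integrable f a b : a <= b ->
  (forall x, a <= x <= b -> piecewise_continuous_at f x) -> Riemann_integrable f a b.
Proof.
  intros hab Hpc.
  (* let [s] be the supremum of the [y] such that [f] is integrable on [a, y]: the one-sided
     continuous representatives at [s] show that [s] is attained and that [s = b] *)
  assert (H : exists _ : Riemann_integrable f a b, True);
    [|exact (proj1_sig (constructive_indefinite_description _ H))].
  set (S := fun y => a <= y <= b /\ exists _ : Riemann_integrable f a y, True).
  assert (Sa : S a) by (split; [lra|exists (RiemannInt_P7 f a); auto]).
  destruct (completeness S) as [s [Hub Hlub]]; [exists b; intros y [Hy _]; lra|eauto|].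
  assert (Has : a <= s) by (apply Hub, Sa).
  assert (Hsb : s <= b) by (apply Hlub; intros y [Hy _]; lra).
  destruct (Hpc s (conj Has Hsb)) as [eta [Heta [gl [gr [Cl [Cr [El Er]]]]]]].
  assert (Ss : S s).
  { destruct (Req_dec s a) as [->|Hsa]; auto.
    set (e := Rmin eta (s - a)).
    assert (He : 0 < e /\ e <= eta) by (unfold e, Rmin; destruct Rle_dec; lra).
    assert (Hy : exists y, S y /\ s - e < y).
    { apply NNPP; intros Hn; assert (s <= s - e); [|lra].
      apply Hlub; intros y Sy; apply Rnot_lt_le; intros Hy; apply Hn; eauto. }
    destruct Hy as [y [[Hy [Iy _]] Hey]].
    assert (y <= s) by (apply Hub; split; eauto).
    split; [lra|]; exists (Riemann_integrable_extend f gl a y s ltac:(lra) ltac:(lra) Cl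
      ltac:(intros; apply El; lra) Iy); auto. }
  destruct (Req_dec s b) as [<-|Hsb']; [destruct Ss as [_ HI]; exact HI|].
  set (z := Rmin (s + eta / 2) b).
  assert (Hz : s < z <= b /\ z < s + eta) by (unfold z, Rmin; destruct Rle_dec; lra).
  assert (z <= s); [|lra].
  apply Hub; destruct Ss as [_ [Is _]]; split; [lra|].
  exists (Riemann_integrable_extend f gr a s z Has ltac:(lra) Cr
    ltac:(intros; apply Er; lra) Is); auto.
Qed.

Lemma piecewise_continuous_ext f g x : (forall y, f y = g y) ->
  piecewise_continuous_at f x -> piecewise_continuous_at g x.
Proof.
  intros E [eta [He [gl [gr [Cl [Cr [El Er]]]]]]].
  exists eta; split; auto; exists gl, gr; repeat split; auto; intros y Hy; rewrite <- E; auto.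
Qed.

Lemma piecewise_continuous_continuous f x : (forall y, continuity_pt f y) ->
  piecewise_continuous_at f x.
Proof. intros C; exists 1; split; [lra|]; exists f, f; repeat split; auto. Qed.

Lemma piecewise_continuous_op (op : R -> R -> R) f g x :
  (forall a b y, continuity_pt a y -> continuity_pt b y ->
     continuity_pt (fun z => op (a z) (b z)) y) ->
  piecewise_continuous_at f x -> piecewise_continuous_at g x ->
  piecewise_continuous_at (fun y => op (f y) (g y)) x.
Proof.
  intros Hop [e1 [He1 [l1 [r1 [Cl1 [Cr1 [El1 Er1]]]]]]]
    [e2 [He2 [l2 [r2 [Cl2 [Cr2 [El2 Er2]]]]]]].
  exists (Rmin e1 e2); split; [unfold Rmin; destruct Rle_dec; lra|].
  exists (fun z => op (l1 z) (l2 z)), (fun z => op (r1 z) (r2 z)).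
  pose proof (Rmin_l e1 e2); pose proof (Rmin_r e1 e2).
  repeat split; auto; intros y Hy.
  - rewrite (El1 y), (El2 y) by lra; auto.
  - rewrite (Er1 y), (Er2 y) by lra; auto.
Qed.

Lemma piecewise_continuous_plus f g x : piecewise_continuous_at f x ->
  piecewise_continuous_at g x -> piecewise_continuous_at (fun y => f y + g y) x.
Proof. apply piecewise_continuous_op; intros; apply continuity_pt_plus; auto. Qed.

Lemma piecewise_continuous_mult f g x : piecewise_continuous_at f x ->
  piecewise_continuous_at g x -> piecewise_continuous_at (fun y => f y * g y) x.
Proof. apply piecewise_continuous_op; intros; apply continuity_pt_mult; auto. Qed.

Lemma piecewise_continuous_minus f g x : piecewise_continuous_at f x ->
  piecewise_continuous_at g x -> piecewise_continuous_at (fun y => f y - g y) x.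
Proof. apply piecewise_continuous_op; intros; apply continuity_pt_minus; auto. Qed.

Lemma piecewise_continuous_sumn (F : nat -> R -> R) x n :
  (forall k, (k < n)%nat -> piecewise_continuous_at (F k) x) ->
  piecewise_continuous_at (fun y => sumn (fun k => F k y) n) x.
Proof.
  induction n; intros H; simpl.
  - apply piecewise_continuous_continuous; intros; apply continuity_pt_const; intros ? ?; auto.
  - apply piecewise_continuous_plus; [apply IHn; intros|]; apply H; lia.
Qed.

Lemma floorR_const_one_side c (above : bool) : exists (z0 : Z) (eps : R), 0 < eps /\
  forall v, Rabs (v - c) < eps -> (if above then c <= v else v < c) -> floorR v = IZR z0.
Proof.
  destruct (floorR_spec c) as [[Hlt|Heq] Hc]; unfold floorR in *.
  - exists (Int_part c), (Rmin (c - IZR (Int_part c)) (IZR (Int_part c) + 1 - c)).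
    split; [unfold Rmin; destruct Rle_dec; lra|].
    pose proof (Rmin_l (c - IZR (Int_part c)) (IZR (Int_part c) + 1 - c)).
    pose proof (Rmin_r (c - IZR (Int_part c)) (IZR (Int_part c) + 1 - c)).
    intros v Hv _; apply Rabs_def2 in Hv; apply floorR_unique; lra.
  - destruct above.
    + exists (Int_part c), 1; split; [lra|]; intros v Hv Hcv.
      apply Rabs_def2 in Hv; apply floorR_unique; lra.
    + exists (Int_part c - 1)%Z, 1; split; [lra|]; intros v Hv Hcv.
      apply Rabs_def2 in Hv; apply floorR_unique; rewrite minus_IZR; lra.
Qed.

Lemma continuity_pt_eps u y : continuity_pt u y -> forall eps, 0 < eps ->
  exists d, 0 < d /\ forall z, Rabs (z - y) < d -> Rabs (u z - u y) < eps.
Proof.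
  intros Hc eps He; destruct (Hc eps He) as [d [Hd H]]; exists d; split; auto.
  intros z Hz; destruct (Req_dec z y) as [->|NE].
  - rewrite Rminus_diag, Rabs_R0; auto.
  - apply (H z); split; [split; [exact I|congruence]|exact Hz].
Qed.

Lemma floorR_comp_const_one_side u y (P : R -> Prop) : continuity_pt u y ->
  (forall z, P z -> u y <= u z) \/ (forall z, P z -> u z < u y) ->
  exists e, 0 < e /\ exists c, forall z, P z -> Rabs (z - y) < e -> floorR (u z) = c.
Proof.
  intros Hu Hside.
  assert (Hb : exists above : bool,
    forall z, P z -> if above then u y <= u z else u z < u y)
    by (destruct Hside; [exists true|exists false]; auto).
  destruct Hb as [above Hab].
  destruct (floorR_const_one_side (u y) above) as [z0 [eps [Heps Hfl]]].
  destruct (continuity_pt_eps u y Hu eps Heps) as [e [He Hue]].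
  exists e; split; auto; exists (IZR z0); intros z Pz Hz.
  apply Hfl; [apply Hue, Hz|apply Hab, Pz].
Qed.

Lemma sin_half_pos s : 0 < s < PI -> 0 < sin (s / 2).
Proof. intros; apply sin_gt_0; lra. Qed.

Lemma sin_half_neg s : - PI < s < 0 -> sin (s / 2) < 0.
Proof.
  intros; replace (s / 2) with (- (- s / 2)) by field; rewrite sin_neg.
  pose proof (sin_half_pos (- s) ltac:(lra)); lra.
Qed.

Lemma cos_sub_sign_near w : exists e, 0 < e /\ exists sl sr : R,
  (forall s, - e < s < 0 -> 0 < sl * (cos (w + s) - cos w)) /\
  (forall s, 0 < s < e -> 0 < sr * (cos (w + s) - cos w)).
Proof.
  assert (HPI := PI_RGT_0).
  assert (Hdiff : forall s, cos (w + s) - cos w = -2 * sin (s / 2) * sin (w + s / 2)).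
  { intros s; rewrite form2.
    replace ((w + s - w) / 2) with (s / 2) by field.
    replace ((w + s + w) / 2) with (w + s / 2) by field; ring. }
  destruct (Req_dec (sin w) 0) as [Hs|Hs].
  - assert (Hc : cos w <> 0).
    { intros Hc; pose proof (sin2_cos2 w) as E; rewrite Hs, Hc in E; unfold Rsqr in E; lra. }
    assert (Hsq : forall s, cos (w + s) - cos w = -2 * cos w * (sin (s / 2) * sin (s / 2)))
      by (intros s; rewrite Hdiff, sin_plus, Hs; ring).
    assert (Hcc : 0 < cos w * cos w) by (apply Rsqr_pos_lt; auto).
    assert (Hpos : forall s, sin (s / 2) <> 0 -> 0 < - cos w * (cos (w + s) - cos w)).
    { intros s Hs0; rewrite Hsq.
      assert (0 < sin (s / 2) * sin (s / 2)) by (apply Rsqr_pos_lt; auto). nra. }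
    exists PI; split; auto; exists (- cos w), (- cos w); split; intros s Hs'; apply Hpos;
      [pose proof (sin_half_neg s ltac:(lra)) | pose proof (sin_half_pos s ltac:(lra))]; lra.
  - destruct (continuity_pt_eps sin w (continuity_sin w) (Rabs (sin w)) (Rabs_pos_lt _ Hs))
      as [d [Hd Hsin]].
    assert (Hkeep : forall s, Rabs (s / 2) < d -> 0 < sin w * sin (w + s / 2)).
    { intros s Hs'; replace (s / 2) with (w + s / 2 - w) in Hs' by ring.
      pose proof (Hsin _ Hs') as H; apply Rabs_def2 in H.
      unfold Rabs in H; destruct Rcase_abs in H; nra. }
    exists (Rmin (2 * d) PI); split; [unfold Rmin; destruct Rle_dec; lra|].
    pose proof (Rmin_l (2 * d) PI); pose proof (Rmin_r (2 * d) PI).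
    exists (sin w), (- sin w); split; intros s Hs'; rewrite Hdiff.
    + pose proof (sin_half_neg s ltac:(lra)).
      pose proof (Hkeep s ltac:(rewrite Rabs_left; lra)). nra.
    + pose proof (sin_half_pos s ltac:(lra)).
      pose proof (Hkeep s ltac:(rewrite Rabs_right; lra)). nra.
Qed.

Lemma piecewise_continuous_Qd_cos r d a x : 0 < r -> 0 < d ->
  piecewise_continuous_at (fun y => Qd d (r * cos (y - a))) x.
Proof.
  intros Hr Hd.
  set (u := fun y => r / d * cos (y - a) + / 2).
  assert (Hu : continuity_pt u x) by (unfold u; reg).
  assert (Hrd : 0 < r / d) by (apply Rdiv_lt_0_compat; auto).
  destruct (cos_sub_sign_near (x - a)) as [e [He [sl [sr [Hl Hr']]]]].
  assert (Hside : forall (P : R -> Prop) sg,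
    (forall z, P z -> 0 < sg * (cos (x - a + (z - x)) - cos (x - a))) ->
    (forall z, P z -> u x <= u z) \/ (forall z, P z -> u z < u x)).
  { intros P sg HP.
    assert (Hu' : forall z, u z - u x = r / d * (cos (x - a + (z - x)) - cos (x - a)))
      by (intros z; unfold u; replace (x - a + (z - x)) with (z - a) by ring; ring).
    destruct (Rlt_le_dec 0 sg) as [Hsg|Hsg]; [left|right]; intros z Pz;
      specialize (HP z Pz); specialize (Hu' z);
      set (D := cos (x - a + (z - x)) - cos (x - a)) in *.
    - assert (0 < D) by (apply (Rmult_lt_reg_l sg); lra). nra.
    - assert (D < 0) by (destruct (Rlt_le_dec D 0); [auto|nra]). nra. }
  destruct (floorR_comp_const_one_side u x (fun z => x - e < z < x) Hu
    (Hside _ sl (fun z (Hz : x - e < z < x) => Hl (z - x) ltac:(lra)))) as [e1 [He1 [c1 Hc1]]].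
  destruct (floorR_comp_const_one_side u x (fun z => x < z < x + e) Hu
    (Hside _ sr (fun z (Hz : x < z < x + e) => Hr' (z - x) ltac:(lra)))) as [e2 [He2 [c2 Hc2]]].
  set (eta := Rmin e (Rmin e1 e2)).
  assert (0 < eta /\ eta <= e /\ eta <= e1 /\ eta <= e2)
    by (unfold eta, Rmin; repeat destruct Rle_dec; lra).
  exists eta; split; [lra|]; exists (fun _ => d * c1), (fun _ => d * c2).
  assert (Hq : forall y, Qd d (r * cos (y - a)) = d * floorR (u y))
    by (intros y; unfold Qd, u; do 3 f_equal; field; lra).
  repeat split; try (intros; apply continuity_pt_const; intros ? ?; auto);
    intros y Hy; rewrite Hq; f_equal.
  - apply Hc1; [lra|rewrite Rabs_left; lra].
  - apply Hc2; [lra|rewrite Rabs_right; lra].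
Qed.

Lemma RiemannInt_antiderivative F f a b : a <= b ->
  (forall x, derivable_pt_lim F x (f x)) -> (forall x, continuity_pt f x) ->
  forall pr : Riemann_integrable f a b, RiemannInt pr = F b - F a.
Proof.
  intros hab HF Hf pr.
  assert (Hf' : forall x, a <= x <= b -> continuity_pt f x) by auto.
  assert (HFa : antiderivative f F a b).
  { split; auto; intros x _; exists (exist _ (f x) (HF x)).
    symmetry; apply derive_pt_eq_0; auto. }
  destruct (antiderivative_Ucte _ _ _ _ _ (RiemannInt_P29 hab Hf') HFa) as [c Hc].
  rewrite (RiemannInt_P20 hab (FTC_P1 hab Hf') pr), (Hc b), (Hc a) by lra; ring.
Qed.

Section Primitive.
Variables (f : R -> R) (a b : R) (hab : a <= b) (pr : Riemann_integrable f a b).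

Definition prim : R -> R :=
  primitive hab (fun x h1 h2 => RiemannInt_P22 pr (conj h1 h2)).

Lemma prim_integrable c d : a <= c -> c <= d -> d <= b -> Riemann_integrable f c d.
Proof.
  intros; apply (RiemannInt_P23 (RiemannInt_P22 pr (conj (Rle_trans _ _ _ H H0) H1))); lra.
Qed.

Lemma prim_sub c d : a <= c -> c <= d -> d <= b ->
  forall prcd : Riemann_integrable f c d, RiemannInt prcd = prim d - prim c.
Proof.
  intros Hac Hcd Hdb prcd; unfold prim, primitive.
  destruct (Rle_dec a d); [|lra]; destruct (Rle_dec d b); [|lra].
  destruct (Rle_dec a c); [|lra]; destruct (Rle_dec c b); [|lra].
  rewrite <- (RiemannInt_P26 (RiemannInt_P22 pr (conj r1 r2)) prcd (RiemannInt_P22 pr (conj r r0))); ring.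
Qed.

Lemma prim_left : prim a = 0.
Proof.
  unfold prim, primitive; destruct (Rle_dec a a); [|ring].
  destruct (Rle_dec a b); [exact (RiemannInt_P9 _)|contradiction].
Qed.

Lemma prim_right : prim b = RiemannInt pr.
Proof. rewrite (prim_sub a b), prim_left; auto with real; ring. Qed.

Lemma prim_sub_bounds c d l u : a <= c -> c <= d -> d <= b ->
  (forall x, c < x < d -> l <= f x <= u) -> l * (d - c) <= prim d - prim c <= u * (d - c).
Proof.
  intros; rewrite <- (prim_sub c d H H0 H1 (prim_integrable c d H H0 H1)).
  apply RiemannInt_const_bound; auto.
Qed.

Lemma prim_sub_antiderivative c d g G : a <= c -> c <= d -> d <= b ->
  (forall x, c < x < d -> f x = g x) -> (forall x, continuity_pt g x) ->
  (forall x, derivable_pt_lim G x (g x)) -> prim d - prim c = G d - G c.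
Proof.
  intros Hac Hcd Hdb Hfg Hg HG.
  rewrite <- (prim_sub c d Hac Hcd Hdb (prim_integrable c d Hac Hcd Hdb)).
  rewrite (RiemannInt_P18 _ (continuity_implies_RiemannInt Hcd (fun x _ => Hg x)) Hcd Hfg).
  apply RiemannInt_antiderivative; auto.
Qed.

End Primitive.

Definition grid_sum (G : R -> R) (n : nat) (t : R) : R :=
  sumn (fun k => G (t + INR k * (2 * PI / INR n))) n.

Section BoundedVariation.
Variables (q V w : R -> R) (M Var : R).
Hypothesis q_bound : forall x, Rabs (q x) <= M.
Hypothesis q_variation : forall c x, - PI <= c -> c <= x -> x <= PI ->
  Rabs (q x - q c) <= V x - V c.
Hypothesis V_range : V PI - V (- PI) <= Var.
Hypothesis w_lipschitz : forall x y, Rabs (w x - w y) <= Rabs (x - y).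
Hypothesis w_bound : forall x, Rabs (w x) <= 1.
Variable pr : Riemann_integrable (fun x => q x * w x) (- PI) PI.

Let hab : - PI <= PI.
Proof. pose proof PI_RGT_0; lra. Qed.
Let Ph := prim (fun x => q x * w x) (- PI) PI hab pr.

Lemma variation_le c x : - PI <= c -> c <= x -> x <= PI -> V c <= V x.
Proof. intros; pose proof (q_variation c x H H0 H1); pose proof (Rabs_pos (q x - q c)); lra. Qed.

Lemma qw_bound x : Rabs (q x * w x) <= M.
Proof.
  rewrite Rabs_mult; pose proof (q_bound x); pose proof (w_bound x).
  pose proof (Rabs_pos (q x)); pose proof (Rabs_pos (w x)); nra.
Qed.

Lemma qw_oscillation c x h : - PI <= c -> c <= x -> x <= c + h -> c + h <= PI ->
  Rabs (q x * w x - q c * w c) <= V (c + h) - V c + M * h.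
Proof.
  intros H1 H2 H3 H4.
  replace (q x * w x - q c * w c) with ((q x - q c) * w x + q c * (w x - w c)) by ring.
  eapply Rle_trans; [apply Rabs_triang|]; rewrite !Rabs_mult.
  pose proof (q_variation c x H1 H2 ltac:(lra)).
  pose proof (variation_le x (c + h) ltac:(lra) H3 H4).
  pose proof (w_bound x); pose proof (q_bound c).
  pose proof (w_lipschitz x c) as Hw; rewrite (Rabs_pos_eq (x - c)) in Hw by lra.
  pose proof (Rabs_pos (q x - q c)); pose proof (Rabs_pos (w x - w c)); pose proof (Rabs_pos (q c)).
  nra.
Qed.

Lemma prim_qw_lipschitz c d : - PI <= c -> c <= d -> d <= PI -> Rabs (Ph d - Ph c) <= M * (d - c).
Proof.
  intros; apply Rabs_le.
  assert (forall x, c < x < d -> - M <= q x * w x <= M) by (intros; apply Rabs_le_between, qw_bound).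
  pose proof (prim_sub_bounds _ _ _ hab pr c d (- M) M H H0 H1 H2); fold Ph in H3; lra.
Qed.

Lemma prim_qw_cell c h : 0 <= h -> - PI <= c -> c + h <= PI ->
  Rabs (Ph (c + h) - Ph c - h * (q c * w c)) <= h * V (c + h) - h * V c + M * h * h.
Proof.
  intros Hh H1 H2; set (D := V (c + h) - V c + M * h).
  assert (Bd : forall x, c < x < c + h -> q c * w c - D <= q x * w x <= q c * w c + D).
  { intros x Hx; pose proof (qw_oscillation c x h H1 ltac:(lra) ltac:(lra) H2) as H.
    apply Rabs_le_between in H; fold D in H; lra. }
  pose proof (prim_sub_bounds _ _ _ hab pr c (c + h) _ _ H1 ltac:(lra) H2 Bd) as H.
  fold Ph in H; replace (c + h - c) with h in H by ring.
  apply Rabs_le; unfold D in H; nra.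
Qed.

Lemma prim_qw_telescope t h m : 0 <= h -> - PI <= t -> t + INR m * h <= PI ->
  Rabs (Ph (t + INR m * h) - Ph t - h * sumn (fun k => q (t + INR k * h) * w (t + INR k * h)) m)
    <= h * (V (t + INR m * h) - V t) + INR m * (M * h * h).
Proof.
  intros Hh Ht Hm; rewrite <- sumn_scal.
  pose proof (sumn_telescope (fun k => Ph (t + INR k * h)) (fun k => h * (q (t + INR k * h)
    * w (t + INR k * h))) (fun k => h * V (t + INR k * h)) (M * h * h) m) as H.
  cbv beta in H; rewrite INR_0, Rmult_0_l, Rplus_0_r in H.
  replace (h * (V (t + INR m * h) - V t)) with (h * V (t + INR m * h) - h * V t) by ring.
  apply H; intros k Hk.
  assert (Hk' : INR (S k) <= INR m) by (apply le_INR; lia).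
  rewrite S_INR in *; pose proof (pos_INR k).
  replace (t + (INR k + 1) * h) with (t + INR k * h + h) by ring.
  apply prim_qw_cell; nra.
Qed.

Lemma riemann_sum_error n t : (0 < n)%nat -> - PI < t -> t <= - PI + 2 * PI / INR n ->
  Rabs (RiemannInt pr - 2 * PI / INR n * grid_sum (fun x => q x * w x) n t)
    <= 2 * PI / INR n * (Var + (3 + 2 * PI) * M).
Proof.
  intros Hn Ht1 Ht2; unfold grid_sum; set (h := 2 * PI / INR n) in *.
  assert (HPI := PI_RGT_0); assert (Hn' : 0 < INR n) by (apply lt_0_INR; auto).
  assert (Hh : 0 < h) by (unfold h; apply Rdiv_lt_0_compat; lra).
  assert (HM : 0 <= M) by (pose proof (q_bound 0); pose proof (Rabs_pos (q 0)); lra).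
  destruct n as [|m]; [lia|]; simpl sumn.
  assert (Hmh : INR m * h = 2 * PI - h) by (unfold h; rewrite S_INR in *; field; lra).
  assert (Hh2 : h <= 2 * PI) by (pose proof (pos_INR m); nra).
  (* the grid splits [-PI, PI] into [-PI, t], [m] cells of length [h], and [e, PI] *)
  pose proof (prim_qw_telescope t h m ltac:(lra) ltac:(lra) ltac:(rewrite Hmh; lra)) as Hcells.
  set (e := t + INR m * h) in *.
  assert (He : e = t + 2 * PI - h) by (unfold e; rewrite Hmh; ring).
  pose proof (prim_qw_lipschitz (- PI) t ltac:(lra) ltac:(lra) ltac:(lra)) as Hleft.
  pose proof (prim_qw_lipschitz e PI ltac:(lra) ltac:(lra) ltac:(lra)) as Hright.
  assert (Hlast : Rabs (h * (q e * w e)) <= h * M)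
    by (rewrite Rabs_mult, Rabs_pos_eq by lra; pose proof (qw_bound e); nra).
  assert (HV : V e - V t <= Var).
  { pose proof (variation_le e PI ltac:(lra) ltac:(lra) ltac:(lra)).
    pose proof (variation_le (- PI) t ltac:(lra) ltac:(lra) ltac:(lra)). lra. }
  rewrite <- (prim_right _ _ _ hab pr); fold Ph.
  replace (Ph PI - h * (sumn (fun k => q (t + INR k * h) * w (t + INR k * h)) m + q e * w e))
    with ((Ph t - Ph (- PI)) + (Ph e - Ph t - h * sumn (fun k => q (t + INR k * h) * w (t + INR k * h)) m)
      + (Ph PI - Ph e) - h * (q e * w e))
    by (unfold Ph at 2; rewrite prim_left; ring).
  unfold Rminus at 1; eapply Rle_trans; [apply Rabs_triang|]; rewrite Rabs_Ropp.
  eapply Rle_trans; [apply Rplus_le_compat_r, Rabs_triang|].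
  eapply Rle_trans; [apply Rplus_le_compat_r, Rplus_le_compat_r, Rabs_triang|].
  assert (INR m * (M * h * h) = (2 * PI - h) * M * h) by (rewrite <- Hmh; ring).
  nra.
Qed.

End BoundedVariation.

Section PeriodicGridSums.
Variables (G : R -> R) (n : nat).
Hypothesis G_periodic : forall x, G (x + 2 * PI) = G x.
Hypothesis n_pos : (0 < n)%nat.

Let h := 2 * PI / INR n.

Lemma grid_sum_step t : grid_sum G n (t + h) = grid_sum G n t.
Proof.
  assert (Hn : 0 < INR n) by (apply lt_0_INR; auto).
  unfold grid_sum; fold h.
  transitivity (sumn (fun k => G (t + INR (S k) * h)) n).
  - apply sumn_ext; intros k _; rewrite S_INR; f_equal; ring.
  - rewrite (sumn_shift (fun k => G (t + INR k * h))).
    replace (t + INR n * h) with (t + 2 * PI) by (unfold h; field; lra).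
    rewrite G_periodic; simpl; rewrite Rmult_0_l, Rplus_0_r; ring.
Qed.

Lemma grid_sum_steps t (z : Z) : grid_sum G n (t + IZR z * h) = grid_sum G n t.
Proof.
  assert (Hnat : forall (j : nat) s, grid_sum G n (s + INR j * h) = grid_sum G n s).
  { induction j; intros s; [simpl; rewrite Rmult_0_l, Rplus_0_r; auto|].
    rewrite S_INR, <- (IHj s), <- (grid_sum_step (s + INR j * h)); f_equal; ring. }
  destruct (Z_le_gt_dec 0 z) as [Hz|Hz].
  - destruct (IZN z Hz) as [j ->]; rewrite <- INR_IZR_INZ; apply Hnat.
  - destruct (IZN (- z) ltac:(lia)) as [j Hj].
    rewrite <- (Hnat j (t + IZR z * h)); f_equal.
    rewrite INR_IZR_INZ, <- Hj, opp_IZR; ring.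
Qed.

Lemma grid_sum_reduce t : exists t', - PI < t' <= - PI + h /\ grid_sum G n t = grid_sum G n t'.
Proof.
  assert (Hh : 0 < h) by (unfold h; apply Rdiv_lt_0_compat;
    [pose proof PI_RGT_0; lra | apply lt_0_INR; auto]).
  set (u := (- PI - t) / h); destruct (archimed u) as [Hup1 Hup2].
  assert (Hu : t + u * h = - PI) by (unfold u; field; lra).
  exists (t + IZR (up u) * h); split; [|symmetry; apply grid_sum_steps]; split; nra.
Qed.

End PeriodicGridSums.

Lemma grid_sum_odd G n : (0 < n)%nat -> (forall x, G (- x) = - G x) ->
  grid_sum G n (- PI + PI / INR n) = 0.
Proof.
  intros Hn HG; assert (Hn' : 0 < INR n) by (apply lt_0_INR; auto).
  unfold grid_sum; apply sumn_antisym; intros k Hk.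
  rewrite <- HG; f_equal.
  rewrite minus_INR, minus_INR by lia; simpl INR; field; lra.
Qed.

Lemma Rabs_sin_le_1 x : Rabs (sin x) <= 1.
Proof. apply Rabs_le; pose proof (SIN_bound x); lra. Qed.

Lemma Rabs_cos_le_1 x : Rabs (cos x) <= 1.
Proof. apply Rabs_le; pose proof (COS_bound x); lra. Qed.

Lemma cos_lipschitz x y : Rabs (cos x - cos y) <= Rabs (x - y).
Proof.
  destruct (MVT_abs cos (fun t => - sin t) y x) as [c [Hc _]];
    [intros; apply derivable_pt_lim_cos|].
  rewrite Hc, Rabs_Ropp; pose proof (Rabs_sin_le_1 c); pose proof (Rabs_pos (x - y)); nra.
Qed.

Lemma sin_lipschitz x y : Rabs (sin x - sin y) <= Rabs (x - y).
Proof.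
  destruct (MVT_abs sin cos y x) as [c [Hc _]]; [intros; apply derivable_pt_lim_sin|].
  rewrite Hc; pose proof (Rabs_cos_le_1 c); pose proof (Rabs_pos (x - y)); nra.
Qed.

Lemma eq0_of_Rabs_le_div_nat x C : (forall n, (0 < n)%nat -> Rabs x <= C / INR n) -> x = 0.
Proof.
  intros H; destruct (Req_dec x 0) as [|Hx]; auto; exfalso.
  assert (HC : 0 < Rabs C + 1) by (pose proof (Rabs_pos C); lra).
  assert (Hx' := Rabs_pos_lt x Hx).
  destruct (archimed_cor1 (Rabs x / (Rabs C + 1))) as [n [Hn1 Hn2]];
    [apply Rdiv_lt_0_compat; auto|].
  assert (Hn : 0 < INR n) by (apply lt_0_INR; auto).
  specialize (H n Hn2); pose proof (Rle_abs C).
  apply (Rmult_lt_compat_r (INR n * (Rabs C + 1))) in Hn1; [|nra].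
  replace (/ INR n * (INR n * (Rabs C + 1))) with (Rabs C + 1) in Hn1 by (field; lra).
  replace (Rabs x / (Rabs C + 1) * (INR n * (Rabs C + 1))) with (Rabs x * INR n) in Hn1
    by (field; lra).
  apply (Rmult_le_compat_r (INR n)) in H; [|lra].
  replace (C / INR n * INR n) with C in H by (field; lra); lra.
Qed.

Definition Qcos (r d t : R) : R := Qd d (r * cos t).

Lemma Qcos_even r d t : Qcos r d (- t) = Qcos r d t.
Proof. unfold Qcos; rewrite cos_neg; auto. Qed.

Lemma Qcos_periodic r d t : Qcos r d (t + 2 * PI) = Qcos r d t.
Proof. unfold Qcos; rewrite cos_plus, cos_2PI, sin_2PI; f_equal; ring. Qed.

(* A nondecreasing function on [-PI, PI] whose increments dominate those of [Qcos]:
   [Qcos] increases on [-PI, 0] and decreases on [0, PI]. *)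
Definition Qcos_var (r d t : R) : R :=
  if Rle_dec t 0 then Qcos r d t else 2 * Qcos r d 0 - Qcos r d t.

Section QuantizedCosine.
Variables (r d : R).
Hypotheses (r_pos : 0 < r) (d_pos : 0 < d).

Lemma Qcos_bound t : Rabs (Qcos r d t) <= r + d.
Proof.
  unfold Qcos; eapply Rle_trans; [apply Qd_abs_le; auto|].
  rewrite Rabs_mult, (Rabs_pos_eq r) by lra.
  pose proof (Rabs_cos_le_1 t); nra.
Qed.

Lemma Qcos_le_Qcos0 t : Qcos r d t <= Qcos r d 0.
Proof. apply Qd_le; auto; rewrite cos_0; pose proof (COS_bound t); nra. Qed.

Lemma Qcos_le_neg x y : - PI <= x -> x <= y -> y <= 0 -> Qcos r d x <= Qcos r d y.
Proof.
  intros; apply Qd_le, Rmult_le_compat_l; try lra.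
  rewrite <- (cos_neg x), <- (cos_neg y); apply cos_decr_1; lra.
Qed.

Lemma Qcos_ge_pos x y : 0 <= x -> x <= y -> y <= PI -> Qcos r d y <= Qcos r d x.
Proof. intros; apply Qd_le, Rmult_le_compat_l; try lra; apply cos_decr_1; lra. Qed.

Lemma Qcos_variation c x : - PI <= c -> c <= x -> x <= PI ->
  Rabs (Qcos r d x - Qcos r d c) <= Qcos_var r d x - Qcos_var r d c.
Proof.
  intros H1 H2 H3; unfold Qcos_var.
  destruct (Rle_dec x 0), (Rle_dec c 0); try lra; apply Rabs_le.
  - pose proof (Qcos_le_neg c x H1 H2 r0); lra.
  - pose proof (Qcos_le_Qcos0 x); pose proof (Qcos_le_Qcos0 c); lra.
  - pose proof (Qcos_ge_pos c x ltac:(lra) H2 H3); lra.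
Qed.

Lemma Qcos_var_range : Qcos_var r d PI - Qcos_var r d (- PI) <= 4 * (r + d).
Proof.
  pose proof PI_RGT_0; unfold Qcos_var.
  destruct (Rle_dec PI 0); [lra|]; destruct (Rle_dec (- PI) 0); [|lra].
  pose proof (Rabs_le_between _ _ (Qcos_bound 0)); pose proof (Rabs_le_between _ _ (Qcos_bound PI)).
  pose proof (Rabs_le_between _ _ (Qcos_bound (- PI))); lra.
Qed.

Lemma piecewise_continuous_Qcos_reflect c x :
  piecewise_continuous_at (fun y => Qcos r d (c - y)) x.
Proof.
  apply piecewise_continuous_ext with (fun y => Qd d (r * cos (y - c))).
  - intros y; unfold Qcos; rewrite <- cos_neg; do 3 f_equal; ring.
  - apply piecewise_continuous_Qd_cos; auto.
Qed.

Lemma piecewise_continuous_Qcos x : piecewise_continuous_at (Qcos r d) x.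
Proof.
  apply piecewise_continuous_ext with (fun y => Qcos r d (0 - y)).
  - intros y; rewrite Rminus_0_l; apply Qcos_even.
  - exact (piecewise_continuous_Qcos_reflect 0 x).
Qed.

Lemma Qcos_riemann_sum_error w (pr : Riemann_integrable (fun x => Qcos r d x * w x) (- PI) PI)
  n t : (forall x y, Rabs (w x - w y) <= Rabs (x - y)) -> (forall x, Rabs (w x) <= 1) ->
  (0 < n)%nat -> - PI < t -> t <= - PI + 2 * PI / INR n ->
  Rabs (RiemannInt pr - 2 * PI / INR n * grid_sum (fun x => Qcos r d x * w x) n t)
    <= 2 * PI / INR n * ((7 + 2 * PI) * (r + d)).
Proof.
  intros Hlip Hw Hn Ht1 Ht2.
  replace ((7 + 2 * PI) * (r + d)) with (4 * (r + d) + (3 + 2 * PI) * (r + d)) by ring.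
  exact (riemann_sum_error _ _ _ _ _ Qcos_bound Qcos_variation Qcos_var_range Hlip Hw pr n t
    Hn Ht1 Ht2).
Qed.

End QuantizedCosine.

Lemma derivable_pt_lim_cos_sq_primitive r x :
  derivable_pt_lim (fun t => r / 2 * (t + sin t * cos t)) x (r * cos x * cos x).
Proof.
  replace (r * cos x * cos x) with (r / 2 * (1 + (cos x * cos x + sin x * - sin x))).
  - apply (derivable_pt_lim_scal (fun t => t + sin t * cos t)).
    apply (derivable_pt_lim_plus id (fun t => sin t * cos t)); [apply derivable_pt_lim_id|].
    apply (derivable_pt_lim_mult sin cos); [apply derivable_pt_lim_sin|apply derivable_pt_lim_cos].
  - pose proof (sin2_cos2 x) as E; unfold Rsqr in E.
    replace (sin x * - sin x) with (cos x * cos x - 1) by lra; field.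
Qed.

Lemma RiemannInt_cos_sq r (pr : Riemann_integrable (fun t => r * cos t * cos t) (- PI) PI) :
  RiemannInt pr = r * PI.
Proof.
  pose proof PI_RGT_0.
  rewrite (RiemannInt_antiderivative (fun t => r / 2 * (t + sin t * cos t))); try lra.
  - rewrite sin_neg, sin_PI; field.
  - apply derivable_pt_lim_cos_sq_primitive.
  - intros; reg.
Qed.

Lemma RiemannInt_Dd_cos_add r d
  (prD : Riemann_integrable (fun t => Dd d (r * cos t) * cos t) (- PI) PI)
  (prQ : Riemann_integrable (fun t => Qcos r d t * cos t) (- PI) PI) :
  RiemannInt prD + RiemannInt prQ = r * PI.
Proof.
  pose proof PI_RGT_0.
  assert (prC : Riemann_integrable (fun t => r * cos t * cos t) (- PI) PI)
    by (apply continuity_implies_RiemannInt; [lra|intros; reg]).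
  rewrite <- (Rmult_1_l (RiemannInt prQ)), <- (RiemannInt_P13 prD prQ (RiemannInt_P10 1 prD prQ)),
    <- (RiemannInt_cos_sq r prC).
  apply RiemannInt_P18; [lra|]; intros; unfold Dd, Qcos; ring.
Qed.

(* No change of variables needed: on a symmetric grid the sums of the odd function [Qcos * sin]
   vanish, and they approximate the integral to within O(1/n). *)
Lemma RiemannInt_Qcos_sin r d : 0 < r -> 0 < d ->
  forall pr : Riemann_integrable (fun t => Qcos r d t * sin t) (- PI) PI, RiemannInt pr = 0.
Proof.
  intros Hr Hd pr; pose proof PI_RGT_0.
  apply eq0_of_Rabs_le_div_nat with (2 * PI * ((7 + 2 * PI) * (r + d))); intros n Hn.
  assert (Hn' : 0 < INR n) by (apply lt_0_INR; auto).
  assert (Hodd : grid_sum (fun x => Qcos r d x * sin x) n (- PI + PI / INR n) = 0).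
  { apply grid_sum_odd; auto; intros x; rewrite Qcos_even, sin_neg; ring. }
  pose proof (Qcos_riemann_sum_error r d Hr Hd sin pr n (- PI + PI / INR n) sin_lipschitz
    Rabs_sin_le_1 Hn) as Herr.
  rewrite Hodd, Rmult_0_r, Rminus_0_r in Herr.
  replace (2 * PI * ((7 + 2 * PI) * (r + d)) / INR n)
    with (2 * PI / INR n * ((7 + 2 * PI) * (r + d))) by (field; lra).
  assert (0 < PI / INR n <= 2 * PI / INR n).
  { split; [apply Rdiv_lt_0_compat; auto|].
    unfold Rdiv; apply Rmult_le_compat_r; [left; apply Rinv_0_lt_compat|]; lra. }
  apply Herr; lra.
Qed.

(* Rotating by [-psi] maps [x_psi] to [(r, 0)] and the frame angles [2 (k+1) PI / N] to the
   grid [h - psi + k h]; the norm is rotation invariant. *)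
Lemma Esq_harm_eq r d N psi : (0 < N)%nat ->
  let t := 2 * PI / INR N - psi in
  Esq d r N (harm N) psi =
    (r - 2 / INR N * grid_sum (fun x => Qcos r d x * cos x) N t) ^ 2
    + (2 / INR N * grid_sum (fun x => Qcos r d x * sin x) N t) ^ 2.
Proof.
  intros HN t; assert (HN' : 0 < INR N) by (apply lt_0_INR; auto).
  set (SC := grid_sum (fun x => Qcos r d x * cos x) N t).
  set (SS := grid_sum (fun x => Qcos r d x * sin x) N t).
  pose (u := fun k => t + INR k * (2 * PI / INR N)).
  assert (Hu : forall k, 2 * INR (S k) * PI / INR N = u k + psi)
    by (intros k; unfold u, t; rewrite S_INR; field; lra).
  assert (Hq : forall k, Qd d (r * cos psi * cos (2 * INR (S k) * PI / INR N)
      + r * sin psi * sin (2 * INR (S k) * PI / INR N)) = Qcos r d (u k)).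
  { intros k; unfold Qcos; rewrite Hu, cos_plus, sin_plus; f_equal.
    pose proof (sin2_cos2 psi) as E; unfold Rsqr in E.
    transitivity (r * cos (u k) * (sin psi * sin psi + cos psi * cos psi)); [ring|rewrite E; ring]. }
  unfold Esq, Edelta, harm; simpl fst; simpl snd; rewrite !sum_f_sumn by auto.
  rewrite (sumn_ext _ (fun k => cos psi * (Qcos r d (u k) * cos (u k))
      + (- sin psi) * (Qcos r d (u k) * sin (u k))))
    by (intros k _; rewrite Hq, Hu, cos_plus; ring).
  rewrite (sumn_ext (fun k => _ * sin _) (fun k => cos psi * (Qcos r d (u k) * sin (u k))
      + sin psi * (Qcos r d (u k) * cos (u k))))
    by (intros k _; rewrite Hq, Hu, sin_plus; ring).
  rewrite !sumn_lin.
  change (sumn (fun k => Qcos r d (u k) * cos (u k)) N) with SC.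
  change (sumn (fun k => Qcos r d (u k) * sin (u k)) N) with SS.
  rewrite <- Rsqr_pow2, Rsqr_sqrt by (apply Rplus_le_le_0_compat; apply pow2_ge_0).
  pose proof (sin2_cos2 psi) as E; unfold Rsqr in E.
  transitivity ((sin psi * sin psi + cos psi * cos psi)
    * ((r - 2 / INR N * SC) ^ 2 + (2 / INR N * SS) ^ 2)); [ring|rewrite E; ring].
Qed.

Lemma piecewise_continuous_Qcos_grid_sum r d w N c x : 0 < r -> 0 < d ->
  (forall y, continuity_pt w y) ->
  piecewise_continuous_at (fun psi => grid_sum (fun y => Qcos r d y * w y) N (c - psi)) x.
Proof.
  intros Hr Hd Hw; unfold grid_sum.
  apply (piecewise_continuous_sumn
    (fun k psi => Qcos r d (c - psi + INR k * (2 * PI / INR N)) * w (c - psi + INR k * (2 * PI / INR N)))).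
  intros k _; apply piecewise_continuous_mult.
  - apply piecewise_continuous_ext with
      (fun psi => Qcos r d ((c + INR k * (2 * PI / INR N)) - psi)); [intros; f_equal; ring|].
    apply piecewise_continuous_Qcos_reflect; auto.
  - apply piecewise_continuous_continuous; intros y.
    apply (continuity_pt_comp (fun psi => c - psi + INR k * (2 * PI / INR N))); [reg|auto].
Qed.

Lemma Esq_harm_integrable r d N : 0 < r -> 0 < d -> (0 < N)%nat ->
  Riemann_integrable (Esq d r N (harm N)) 0 (2 * PI).
Proof.
  intros Hr Hd HN; pose proof PI_RGT_0.
  set (SC := fun psi => grid_sum (fun x => Qcos r d x * cos x) N (2 * PI / INR N - psi)).
  set (SS := fun psi => grid_sum (fun x => Qcos r d x * sin x) N (2 * PI / INR N - psi)).
  apply Riemann_integrable_ext with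
    (fun psi => (r - 2 / INR N * SC psi) * (r - 2 / INR N * SC psi)
      + (2 / INR N * SS psi) * (2 / INR N * SS psi)).
  { intros psi _; rewrite Esq_harm_eq by auto; unfold SC, SS; ring. }
  apply piecewise_continuous_integrable; [lra|]; intros x _.
  assert (Hc : forall c, piecewise_continuous_at (fun _ => c) x) by (intros;
    apply piecewise_continuous_continuous; intros; apply continuity_pt_const; intros ? ?; auto).
  assert (HSC : piecewise_continuous_at SC x)
    by exact (piecewise_continuous_Qcos_grid_sum r d cos N _ x Hr Hd continuity_cos).
  assert (HSS : piecewise_continuous_at SS x)
    by exact (piecewise_continuous_Qcos_grid_sum r d sin N _ x Hr Hd continuity_sin).
  assert (HA : piecewise_continuous_at (fun psi => r - 2 / INR N * SC psi) x)
    by exact (piecewise_continuous_minus _ _ x (Hc r)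
      (piecewise_continuous_mult (fun _ => 2 / INR N) SC x (Hc _) HSC)).
  assert (HB : piecewise_continuous_at (fun psi => 2 / INR N * SS psi) x)
    by exact (piecewise_continuous_mult (fun _ => 2 / INR N) SS x (Hc _) HSS).
  exact (piecewise_continuous_plus _ _ x (piecewise_continuous_mult _ _ x HA HA)
    (piecewise_continuous_mult _ _ x HB HB)).
Qed.

Section Plateaus.
Variables (r d : R).
Hypotheses (r_pos : 0 < r) (d_pos : 0 < d) (ratio : 1 / 2 < r / d < 3 / 2).

Let alpha := acos (d / (2 * r)).

Lemma plateau_angle : 0 < alpha < PI / 2 /\ cos alpha = d / (2 * r).
Proof.
  assert (Hc : 0 < d / (2 * r) < 1).
  { replace (d / (2 * r)) with (/ (2 * (r / d))) by (field; lra).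
    split; [apply Rinv_0_lt_compat; lra|rewrite <- Rinv_1; apply Rinv_lt_contravar; lra]. }
  assert (Hcos : cos alpha = d / (2 * r)) by (apply cos_acos; lra).
  destruct (acos_bound_lt (d / (2 * r))) as [H1 H2]; [lra|]; fold alpha in H1, H2.
  repeat split; auto; destruct (Rlt_or_le alpha (PI / 2)); auto.
  pose proof (cos_le_0 alpha ltac:(lra) ltac:(lra)); lra.
Qed.

(* [Qcos] takes the values [d], [0], [-d] on the arcs where [r cos t / d] lies in
   [(1/2, 3/2)], [(-1/2, 1/2)], [(-3/2, -1/2)]. *)
Lemma Qcos_plateaus t : - PI <= t <= PI ->
  (Rabs t < alpha -> Qcos r d t = d) /\
  (alpha < Rabs t < PI - alpha -> Qcos r d t = 0) /\
  (PI - alpha < Rabs t -> Qcos r d t = - d).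
Proof.
  intros Ht; destruct plateau_angle as [Ha Hca].
  assert (Hs : cos t = cos (Rabs t) /\ 0 <= Rabs t <= PI).
  { unfold Rabs; destruct Rcase_abs; [rewrite cos_neg|]; split; auto; lra. }
  destruct Hs as [Hs Hst]; set (s := Rabs t) in *.
  assert (Hx : forall z : Z, IZR z - / 2 <= r / d * cos s < IZR z + / 2 ->
    Qcos r d t = d * IZR z).
  { intros z Hz; unfold Qcos; rewrite (Qd_level d _ z); auto.
    rewrite Hs; replace (r * cos s / d) with (r / d * cos s) by (field; lra); auto. }
  assert (Hhalf : r / d * (d / (2 * r)) = / 2) by (field; lra).
  pose proof (COS_bound s); assert (0 < r / d) by lra.
  repeat split; intros Hrange.
  - rewrite (Hx 1%Z); [ring|]; simpl IZR.
    assert (d / (2 * r) < cos s) by (rewrite <- Hca; apply cos_decreasing_1; lra). nra.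
  - rewrite (Hx 0%Z); [ring|]; simpl IZR.
    assert (cos s < d / (2 * r)) by (rewrite <- Hca; apply cos_decreasing_1; lra).
    assert (Hm : cos (PI - s) < d / (2 * r)) by (rewrite <- Hca; apply cos_decreasing_1; lra).
    rewrite cos_minus, cos_PI, sin_PI in Hm; nra.
  - rewrite (Hx (-1)%Z); [ring|]; simpl IZR.
    assert (Hm : d / (2 * r) < cos (PI - s)) by (rewrite <- Hca; apply cos_decreasing_1; lra).
    rewrite cos_minus, cos_PI, sin_PI in Hm; nra.
Qed.

Lemma RiemannInt_Qcos_cos_plateaus
  (pr : Riemann_integrable (fun t => Qcos r d t * cos t) (- PI) PI) :
  RiemannInt pr = 4 * d * sin alpha.
Proof.
  destruct plateau_angle as [Ha _]; assert (HPI := PI_RGT_0).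
  assert (hab : - PI <= PI) by lra.
  set (P := prim _ _ _ hab pr).
  assert (Arc : forall k a b, - PI <= a -> a <= b -> b <= PI ->
    (forall t, a < t < b -> Qcos r d t = k) -> P b - P a = k * sin b - k * sin a).
  { intros k a b H1 H2 H3 Hk; apply (prim_sub_antiderivative _ _ _ hab pr a b
      (fun t => k * cos t) (fun t => k * sin t)); auto.
    - intros t Ht; rewrite Hk; auto.
    - intros; reg.
    - intros; apply (derivable_pt_lim_scal sin), derivable_pt_lim_sin. }
  rewrite <- (prim_right _ _ _ hab pr); fold P.
  replace (P PI) with ((P PI - P (PI - alpha)) + (P (PI - alpha) - P alpha)
    + (P alpha - P (- alpha)) + (P (- alpha) - P (- (PI - alpha)))
    + (P (- (PI - alpha)) - P (- PI)) + P (- PI)) by ring.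
  rewrite (Arc (- d) (PI - alpha) PI), (Arc 0 alpha (PI - alpha)), (Arc d (- alpha) alpha),
    (Arc 0 (- (PI - alpha)) (- alpha)), (Arc (- d) (- PI) (- (PI - alpha))); try lra;
    try (intros t Ht; apply Qcos_plateaus; [lra|]; unfold Rabs; destruct Rcase_abs; lra).
  replace (P (- PI)) with 0 by (symmetry; apply prim_left).
  rewrite !sin_neg, sin_PI, sin_PI_x; ring.
Qed.

End Plateaus.

Lemma critical_ratio_spec x : x = sqrt (8 - 2 * sqrt (16 - PI ^ 2)) / PI ->
  1 / 2 < x < 3 / 2 /\ PI ^ 2 * x ^ 4 = 16 * x ^ 2 - 4.
Proof.
  intros ->; assert (HPI := PI_RGT_0); assert (HP4 := PI_4); assert (HP3 := PI2_3_2).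
  set (s := sqrt (16 - PI ^ 2)).
  assert (Hs : 0 <= s /\ s * s = 16 - PI ^ 2) by (split; [apply sqrt_pos|apply sqrt_sqrt; nra]).
  assert (Hs4 : s < 4) by nra.
  set (x := sqrt (8 - 2 * s) / PI).
  assert (Hx : 0 <= x)
    by (unfold x, Rdiv; apply Rmult_le_pos; [apply sqrt_pos|left; apply Rinv_0_lt_compat; lra]).
  assert (Hx2 : x * x * (PI * PI) = 8 - 2 * s).
  { unfold x; rewrite <- (sqrt_sqrt (8 - 2 * s)) at 3 by lra; field; lra. }
  assert (H32 : 8 * s < 32 - PI * PI).
  { apply Rsqr_incrst_0; unfold Rsqr; nra. }
  assert (/ 4 < x * x < 9 / 4).
  { split; apply (Rmult_lt_reg_r (PI * PI)); try nra; rewrite Hx2; nra. }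
  split; [split; nra|].
  apply (Rmult_eq_reg_r (PI * PI)); [|nra].
  replace (PI ^ 2 * x ^ 4 * (PI * PI)) with ((x * x * (PI * PI)) * (x * x * (PI * PI))) by ring.
  replace ((16 * x ^ 2 - 4) * (PI * PI)) with (16 * (x * x * (PI * PI)) - 4 * (PI * PI)) by ring.
  rewrite Hx2; nra.
Qed.

Lemma plateau_balance r d : 0 < r -> 0 < d -> 1 / 2 < r / d ->
  PI ^ 2 * (r / d) ^ 4 = 16 * (r / d) ^ 2 - 4 -> 4 * d * sin (acos (d / (2 * r))) = r * PI.
Proof.
  intros Hr Hd Hx Heq; assert (HPI := PI_RGT_0).
  replace (d / (2 * r)) with (/ (2 * (r / d))) by (field; lra).
  replace r with (r / d * d) at 2 by (field; lra).
  set (x := r / d) in *.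
  assert (Hc : 0 < / (2 * x) < 1).
  { split; [apply Rinv_0_lt_compat; lra|rewrite <- Rinv_1; apply Rinv_lt_contravar; lra]. }
  rewrite sin_acos by lra.
  rewrite (sqrt_lem_1 _ (PI * x / 4)); [field| |nra|].
  - unfold Rsqr; assert (/ (2 * x) * / (2 * x) < 1) by nra; lra.
  - unfold Rsqr; apply (Rmult_eq_reg_r (16 * x * x)); [|nra].
    field_simplify; [|lra]; lra.
Qed.

Lemma Qcos_weighted_integrable r d w : 0 < r -> 0 < d -> (forall y, continuity_pt w y) ->
  Riemann_integrable (fun t => Qcos r d t * w t) (- PI) PI.
Proof.
  intros Hr Hd Hw; pose proof PI_RGT_0.
  apply piecewise_continuous_integrable; [lra|]; intros x _.
  apply piecewise_continuous_mult;
    [apply piecewise_continuous_Qcos|apply piecewise_continuous_continuous]; auto.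
Qed.

Lemma Dd_cos_integrable r d : 0 < r -> 0 < d ->
  Riemann_integrable (fun t => Dd d (r * cos t) * cos t) (- PI) PI.
Proof.
  intros Hr Hd; pose proof PI_RGT_0.
  apply piecewise_continuous_integrable; [lra|]; intros x _.
  apply piecewise_continuous_ext with (fun t => r * cos t * cos t - Qcos r d t * cos t);
    [intros; unfold Dd, Qcos; ring|].
  apply piecewise_continuous_minus; [apply piecewise_continuous_continuous; intros; reg|].
  apply piecewise_continuous_mult;
    [apply piecewise_continuous_Qcos|apply piecewise_continuous_continuous, continuity_cos]; auto.
Qed.

Lemma Dd_cos_integral_critical_ratio r d : 0 < r -> 0 < d ->
  r / d = sqrt (8 - 2 * sqrt (16 - PI ^ 2)) / PI ->
  has_integral (fun t => Dd d (r * cos t) * cos t) (- PI) PI 0.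
Proof.
  intros Hr Hd Hrd; destruct (critical_ratio_spec _ Hrd) as [Hrange Hpoly].
  set (prQ := Qcos_weighted_integrable r d cos Hr Hd continuity_cos).
  exists (Dd_cos_integrable r d Hr Hd).
  pose proof (RiemannInt_Dd_cos_add r d (Dd_cos_integrable r d Hr Hd) prQ) as H.
  rewrite (RiemannInt_Qcos_cos_plateaus r d Hr Hd Hrange), plateau_balance in H; lra.
Qed.

Lemma grid_error_rescale I S K N : (0 < N)%nat ->
  Rabs (I - 2 * PI / INR N * S) <= 2 * PI / INR N * K ->
  Rabs (I / PI - 2 / INR N * S) <= 2 * (K / INR N).
Proof.
  intros HN H; assert (HPI := PI_RGT_0); assert (0 < INR N) by (apply lt_0_INR; auto).
  replace (I / PI - 2 / INR N * S) with ((I - 2 * PI / INR N * S) * / PI) by (field; lra).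
  rewrite Rabs_mult, (Rabs_pos_eq (/ PI)) by (left; apply Rinv_0_lt_compat; lra).
  apply (Rmult_le_reg_r PI); auto; rewrite Rmult_assoc, Rinv_l, Rmult_1_r by lra.
  replace (2 * (K / INR N) * PI) with (2 * PI / INR N * K) by (field; lra); auto.
Qed.

Section ErrorBound.
Variables (r d : R).
Hypotheses (r_pos : 0 < r) (d_pos : 0 < d).
Variable prC : Riemann_integrable (fun t => Qcos r d t * cos t) (- PI) PI.
Hypothesis Qcos_cos_integral : RiemannInt prC = r * PI.

Let K := (7 + 2 * PI) * (r + d).

Lemma Esq_harm_le N psi : (0 < N)%nat -> Esq d r N (harm N) psi <= 8 * (K / INR N) ^ 2.
Proof.
  intros HN; assert (HPI := PI_RGT_0).
  rewrite Esq_harm_eq by auto.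
  destruct (grid_sum_reduce (fun x => Qcos r d x * cos x) N
    ltac:(intros; cbv beta; rewrite Qcos_periodic, cos_plus, cos_2PI, sin_2PI; ring) HN
    (2 * PI / INR N - psi)) as [t1 [Ht1 ->]].
  destruct (grid_sum_reduce (fun x => Qcos r d x * sin x) N
    ltac:(intros; cbv beta; rewrite Qcos_periodic, sin_plus, cos_2PI, sin_2PI; ring) HN
    (2 * PI / INR N - psi)) as [t2 [Ht2 ->]].
  set (prS := Qcos_weighted_integrable r d sin r_pos d_pos continuity_sin).
  pose proof (Qcos_riemann_sum_error r d r_pos d_pos cos prC N t1 cos_lipschitz Rabs_cos_le_1
    HN ltac:(lra) ltac:(lra)) as HC.
  pose proof (Qcos_riemann_sum_error r d r_pos d_pos sin prS N t2 sin_lipschitz Rabs_sin_le_1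
    HN ltac:(lra) ltac:(lra)) as HS.
  rewrite Qcos_cos_integral in HC; rewrite (RiemannInt_Qcos_sin r d r_pos d_pos prS) in HS.
  apply grid_error_rescale in HC, HS; auto; fold K in HC, HS.
  replace (r * PI / PI) with r in HC by (field; lra).
  rewrite Rdiv_0_l, Rminus_0_l, Rabs_Ropp in HS.
  rewrite <- (pow2_abs (r - _)), <- (pow2_abs (2 / INR N * _)).
  pose proof (Rabs_pos (r - 2 / INR N * grid_sum (fun x => Qcos r d x * cos x) N t1)).
  pose proof (Rabs_pos (2 / INR N * grid_sum (fun x => Qcos r d x * sin x) N t2)).
  simpl; nra.
Qed.

End ErrorBound.

Lemma Esq_harm_L2_bound r d : 0 < r -> 0 < d ->
  has_integral (fun t => Dd d (r * cos t) * cos t) (- PI) PI 0 ->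
  forall N, (0 < N)%nat -> exists I, has_integral (Esq d r N (harm N)) 0 (2 * PI) I /\
    sqrt I <= 4 * ((7 + 2 * PI) * (r + d)) * sqrt PI / INR N.
Proof.
  intros Hr Hd [prD HD] N HN; assert (HPI := PI_RGT_0).
  assert (HN' : 0 < INR N) by (apply lt_0_INR; auto).
  set (prC := Qcos_weighted_integrable r d cos Hr Hd continuity_cos).
  assert (HC : RiemannInt prC = r * PI)
    by (pose proof (RiemannInt_Dd_cos_add r d prD prC); lra).
  set (K := (7 + 2 * PI) * (r + d)); assert (0 <= K) by (unfold K; nra).
  set (pE := Esq_harm_integrable r d N Hr Hd HN).
  exists (RiemannInt pE); split; [exists pE; auto|].
  assert (HE : RiemannInt pE <= 8 * (K / INR N) ^ 2 * (2 * PI - 0)).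
  { apply (RiemannInt_const_bound (l := 0) pE); [lra|]; intros psi _; split.
    - unfold Esq; apply pow2_ge_0.
    - apply (Esq_harm_le r d Hr Hd prC HC N psi HN). }
  rewrite <- (sqrt_pow2 (4 * K * sqrt PI / INR N)).
  - apply sqrt_le_1_alt; eapply Rle_trans; [exact HE|]; right.
    replace ((4 * K * sqrt PI / INR N) ^ 2) with (16 * (K / INR N) ^ 2 * (sqrt PI * sqrt PI))
      by (field; lra).
    rewrite sqrt_sqrt by lra; ring.
  - unfold Rdiv; apply Rmult_le_pos; [pose proof (sqrt_pos PI); nra|].
    left; apply Rinv_0_lt_compat; auto.
Qed.

Theorem theorem1p2 :
  (forall r delta : R, 0 < r -> 0 < delta ->
     has_integral (fun theta => Dd delta (r * cos theta) * cos theta) (- PI) PI 0 ->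
     exists C : R, exists N0 : nat,
       forall N : nat, (3 <= N)%nat -> (N0 <= N)%nat ->
         exists I : R,
           has_integral (Esq delta r N (harm N)) 0 (2 * PI) I /\
           sqrt I <= C / INR N)
  /\
  (forall r delta : R, 0 < r -> 0 < delta ->
     r / delta = sqrt (8 - 2 * sqrt (16 - PI ^ 2)) / PI ->
     has_integral (fun theta => Dd delta (r * cos theta) * cos theta) (- PI) PI 0).
Proof.
  split.
  - intros r delta Hr Hd H.
    exists (4 * ((7 + 2 * PI) * (r + delta)) * sqrt PI), O; intros N HN _.
    apply Esq_harm_L2_bound; auto; lia.
  - exact Dd_cos_integral_critical_ratio.
Qed.
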